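(* Let $\mathcal{G}'$ and $\mathcal{G}''$ be two simple directed graphs on the same finite vertex set $\Pi$, each containing exactly one root component. Then there is a finite sequence of simple directed graphs $\mathcal{G}'=\mathcal{G}_0,\mathcal{G}_1,\dots,\mathcal{G}_k=\mathcal{G}''$ on $\Pi$, each containing exactly one root component, such that any two consecutive graphs differ in at most one edge. Moreover, if $\mathcal{G}'$ and $\mathcal{G}''$ have the same root component $\mathcal{R}$, the sequence can be chosen so that every $\mathcal{G}_i$ has root component $\mathcal{R}$.
   Context: A root component of a directed graph $\mathcal{G}$ is a strongly connected component $\mathcal{R}$ of $\mathcal{G}$ such that there is no edge $(q\to p)$ in $\mathcal{G}$ with $p\in\mathcal{R}$ and $q\notin\mathcal{R}$. *)

From mathcomp Require Import all_boot.
Set Implicit Arguments. Unset Strict Implicit. Unset Printing Implicit Defensive.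

(* A simple directed graph on a finite vertex set T is an edge relation
   g : rel T (g q p means there is an edge q -> p); simple = no self-loops
   (multi-edges are impossible for a relation). *)
Definition simple_digraph (T : finType) (g : rel T) : Prop := irreflexive g.

Definition scc (T : finType) (g : rel T) (R : {set T}) : Prop :=
  R != set0 /\
  forall x, x \in R -> forall y, (y \in R) = (connect g x y && connect g y x).

Definition root_component (T : finType) (g : rel T) (R : {set T}) : Prop :=
  scc g R /\ forall q p, g q p -> p \in R -> q \in R.

Definition unique_root (T : finType) (g : rel T) (R : {set T}) : Prop :=
  forall R', root_component g R' <-> R' = R.

Definition has_unique_root (T : finType) (g : rel T) : Prop :=
  exists R, unique_root g R.

Definition differ_at_most_one_edge (T : finType) (g h : rel T) : Prop :=
  #|[set e : T * T | g e.1 e.2 != h e.1 e.2]| <= 1.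

(* Single-root graphs on T are exactly the simple graphs [g] "rooted at" some
   nonempty set R: R is closed under predecessors and every vertex is
   reachable from every vertex of R; R is then the root component.  For fixed
   R the graph [star R], with an edge from each vertex of R to every other
   vertex, serves as a hub: any simple graph rooted at R is reduced to
   [star R] one edge at a time, first adding the missing edges out of R
   (this keeps R closed) and then deleting the extra edges out of T \ R (the
   edges of [star R] keep everything reachable from R).  Joining two graphs
   with the same root therefore goes through [star R].  For different roots,
   [star R] is joined to the complete graph [star [set: T]] by repeatedly
   taking x outside R and adding one edge from x into R, after which the
   graph is rooted at x |: R and reduces to [star (x |: R)]. *)
From Stdlib Require Import FunctionalExtensionality.
From mathcomp Require Import all_boot.

Set Implicit Arguments. Unset Strict Implicit. Unset Printing Implicit Defensive.

Section RootedGraphs.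

Variable T : finType.
Implicit Types (g h : rel T) (R : {set T}).

Definition pred_closed g R := forall q p, g q p -> p \in R -> q \in R.

Definition rooted_at g R :=
  [/\ R != set0, forall x, x \in R -> forall y, connect g x y & pred_closed g R].

Lemma pred_closed_connect g R x y :
  pred_closed g R -> connect g x y -> y \in R -> x \in R.
Proof.
move=> closedR /connectP[s gs ->]; elim: s x gs => [|z s IHs] x //= /andP[gxz gs].
by move/(IHs z gs); apply: closedR.
Qed.

Lemma rooted_at_unique_root g R : rooted_at g R -> unique_root g R.
Proof.
case=> R0 reachR closedR R'; split=> [[[R'0 sccR'] closedR']|->].
  have [z zR'] := set0Pn _ R'0; have [x xR] := set0Pn _ R0.
  have subRR' u : u \in R -> u \in R'.
    by move=> uR; apply: pred_closed_connect closedR' (reachR u uR z) zR'.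
  apply/setP=> u; apply/idP/idP=> [|/subRR' //].
  rewrite (sccR' x (subRR' x xR)) => /andP[_ cux].
  exact: pred_closed_connect closedR cux xR.
split=> //; split=> // x xR y; apply/idP/andP=> [yR|[_ cyx]].
  by split; apply: reachR.
exact: pred_closed_connect closedR cyx xR.
Qed.

Lemma exists_source_ancestor g y :
  exists2 z, connect g z y & forall w, connect g w z -> connect g z w.
Proof.
pose anc w := [set u | connect g u w].
have [z czy min_z] := arg_minnP (P := connect g ^~ y) (fun w => #|anc w|) (connect0 g y).
exists z => // w cwz.
have sub_wz : anc w \subset anc z.
  by apply/subsetP=> u; rewrite !inE => cuw; apply: connect_trans cuw cwz.
have /eqP anc_wz : anc w == anc z.
  by rewrite eqEcard sub_wz min_z //; apply: connect_trans cwz czy.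
have : z \in anc w by rewrite anc_wz inE connect0.
by rewrite inE.
Qed.

Lemma unique_root_rooted_at g R : unique_root g R -> rooted_at g R.
Proof.
move=> uniqR; have [[R0 sccR] closedR] : root_component g R by apply/uniqR.
split=> // x xR y.
have [z czy source_z] := exists_source_ancestor g y.
have rootz : root_component g [set w | connect g w z].
  split; [split|].
  - by apply/set0Pn; exists z; rewrite inE connect0.
  - move=> u; rewrite inE => cuz v; rewrite inE; apply/idP/andP=> [cvz|[_ cvu]].
      by split; [apply: connect_trans cuz (source_z v cvz)|
                 apply: connect_trans cvz (source_z u cuz)].
    exact: connect_trans cvu cuz.
  - by move=> q p gqp; rewrite !inE; apply: connect_trans (connect1 gqp).
have zR : z \in R by rewrite -(proj1 (uniqR _) rootz) inE connect0.
have /andP[cxz _] : connect g x z && connect g z x by rewrite -sccR.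
exact: connect_trans cxz czy.
Qed.

Lemma unique_rootP g R : unique_root g R <-> rooted_at g R.
Proof. by split; [apply: unique_root_rooted_at|apply: rooted_at_unique_root]. Qed.

Definition update_edge g a b (v : bool) : rel T :=
  fun x y => if (x == a) && (y == b) then v else g x y.

Lemma connect_add_edge g a b x y :
  connect g x y -> connect (update_edge g a b true) x y.
Proof. by apply: connect_sub => u v guv; rewrite connect1 ///update_edge guv if_same. Qed.

Definition edge_diff g h := [set e : T * T | g e.1 e.2 != h e.1 e.2].

Lemma differ_update_edge g a b v : differ_at_most_one_edge g (update_edge g a b v).
Proof.
rewrite /differ_at_most_one_edge -(cards1 (a, b)) subset_leq_card //.
apply/subsetP=> -[x y]; rewrite !inE /update_edge /= xpair_eqE.
by case: ifP => // _; rewrite eqxx.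
Qed.

Lemma differ_at_most_one_edge_sym g h :
  differ_at_most_one_edge g h -> differ_at_most_one_edge h g.
Proof.
rewrite /differ_at_most_one_edge.
by under eq_finset => e do rewrite eq_sym.
Qed.

Lemma edge_diff_update_edge g h a b :
  edge_diff (update_edge g a b (h a b)) h = edge_diff g h :\ (a, b).
Proof.
apply/setP=> -[x y]; rewrite !inE /update_edge /= xpair_eqE.
by case: ifP => [/andP[/eqP-> /eqP->]|_]; rewrite ?eqxx.
Qed.

Lemma edge_diff_eq0 g h : edge_diff g h = set0 -> g = h.
Proof.
move=> /setP diff0; apply: functional_extensionality => x.
apply: functional_extensionality => y.
by apply/eqP; have := diff0 (x, y); rewrite !inE => /negbFE.
Qed.

Lemma edge_diff_neq g h a b :
  simple_digraph g -> simple_digraph h -> (a, b) \in edge_diff g h -> a != b.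
Proof. by move=> sg sh; apply: contraTneq => <-; rewrite /edge_diff inE /= sg sh. Qed.

Lemma simple_update_edge g a b v :
  simple_digraph g -> a != b -> simple_digraph (update_edge g a b v).
Proof.
move=> sg neq_ab x; rewrite /update_edge; case: ifP => [/andP[/eqP-> /eqP ab]|_].
  by rewrite ab eqxx in neq_ab.
exact: sg.
Qed.

Definition star R : rel T := fun x y => (x \in R) && (x != y).

Lemma simple_star R : simple_digraph (star R).
Proof. by move=> x; rewrite /star eqxx andbF. Qed.

Lemma star_rooted_at R : R != set0 -> rooted_at (star R) R.
Proof.
split=> // [x xR y|q p /andP[] //].
by case: (eqVneq x y) => [<-|neq_xy]; rewrite ?connect0 // connect1 ///star xR.
Qed.

Lemma rooted_at_add_edge g R a b :
  rooted_at g R -> a \in R -> rooted_at (update_edge g a b true) R.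
Proof.
case=> R0 reachR closedR aR; split=> // [x xR y|q p].
  exact/connect_add_edge/reachR.
by rewrite /update_edge; case: ifP => [/andP[/eqP-> _] //|_]; apply: closedR.
Qed.

Lemma rooted_at_remove_edge g R a b :
  rooted_at g R -> (forall x y, star R x y -> g x y) -> a \notin R ->
  rooted_at (update_edge g a b false) R.
Proof.
case=> R0 _ closedR star_g aRN; split=> // [x xR y|q p].
  have [<-|neq_xy] := eqVneq x y; first exact: connect0.
  apply: connect1; rewrite /update_edge star_g /star ?xR //.
  by case: eqP aRN => // <-; rewrite xR.
by rewrite /update_edge; case: ifP => // _; apply: closedR.
Qed.

Lemma rooted_at_star_update R x r :
  x \notin R -> r \in R -> rooted_at (update_edge (star R) x r true) (x |: R).
Proof.
move=> xRN rR; have R0 : R != set0 by apply/set0Pn; exists r.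
have [_ reachR _] := star_rooted_at R0.
have reachR' u : u \in R -> forall v, connect (update_edge (star R) x r true) u v.
  by move=> uR v; apply/connect_add_edge/reachR.
split=> [|u|q p].
- by apply/set0Pn; exists x; rewrite setU11.
- rewrite in_setU1 => /predU1P[-> v|]; last exact: reachR'.
  by apply: connect_trans (reachR' r rR v); rewrite connect1 ///update_edge !eqxx.
- rewrite /update_edge !in_setU1; case: ifP => [/andP[/eqP-> _] _|_ /andP[qR _]] _.
    by rewrite eqxx.
  by rewrite qR orbT.
Qed.

End RootedGraphs.

Section FlipPaths.

Variables (T : finType) (Q : rel T -> Prop).

Inductive flip_path : rel T -> rel T -> Prop :=
| flip_path0 g : Q g -> flip_path g g
| flip_pathS g h k : Q g -> differ_at_most_one_edge g h -> flip_path h k ->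
    flip_path g k.

Lemma flip_path_trans g h k : flip_path g h -> flip_path h k -> flip_path g k.
Proof. by elim=> // g1 h1 k1 Qg1 d1 _ IH /IH; apply: flip_pathS. Qed.

Lemma flip_path_sym g h : flip_path g h -> flip_path h g.
Proof.
elim=> [g0 Qg0|g1 h1 k1 Qg1 d1 p1 IH]; first exact: flip_path0.
apply: flip_path_trans IH (flip_pathS _ (differ_at_most_one_edge_sym d1) (flip_path0 Qg1)).
by case: p1.
Qed.

Lemma flip_path_sequence g h : flip_path g h ->
  exists (k : nat) (G : nat -> rel T),
    G 0 =2 g /\ G k =2 h /\ (forall i, i <= k -> Q (G i)) /\
    (forall i, i < k -> differ_at_most_one_edge (G i) (G i.+1)).
Proof.
elim=> [g0 Qg0|g1 h1 k1 Qg1 d1 _ [k [G [G0 [Gk [QG dG]]]]]].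
  by exists 0, (fun=> g0); do !split=> // i; rewrite leqn0 => /eqP->.
have G0E : G 0 = h1.
  by apply: functional_extensionality => x; apply: functional_extensionality.
exists k.+1, (fun i => if i is j.+1 then G j else g1).
split=> //; split=> //; split=> -[|i] //; [exact: QG|by rewrite G0E|exact: dG].
Qed.

End FlipPaths.

Lemma flip_path_sub (T : finType) (Q Q' : rel T -> Prop) g h :
  (forall g, Q g -> Q' g) -> flip_path Q g h -> flip_path Q' g h.
Proof.
move=> QQ'; elim=> [g0 /QQ'|g1 h1 k1 /QQ' Qg1 d1 _]; first exact: flip_path0.
exact: flip_pathS.
Qed.

Section ReductionToStar.

Variable T : finType.
Implicit Types (g : rel T) (R : {set T}).

Definition simple_rooted_at R g := simple_digraph g /\ rooted_at g R.

Lemma flip_towards_star g R :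
  simple_rooted_at R g -> edge_diff g (star R) != set0 ->
  exists a b, (a, b) \in edge_diff g (star R) /\
    simple_rooted_at R (update_edge g a b (star R a b)).
Proof.
move=> [sg rootR] diff0.
have neq_ab a b : (a, b) \in edge_diff g (star R) -> a != b.
  exact/edge_diff_neq/simple_star.
case: (boolP [exists e, (e \in edge_diff g (star R)) && (e.1 \in R)]).
  case/existsP=> -[a b] /andP[dab /= aR]; exists a, b; split=> //.
  have -> : star R a b = true by rewrite /star aR neq_ab.
  by split; [apply: simple_update_edge sg (neq_ab _ _ dab)|apply: rooted_at_add_edge].
move=> /existsPn outside; have [[a b] dab] := set0Pn _ diff0; exists a, b; split=> //.
have aRN : a \notin R by have := outside (a, b); rewrite dab.
have -> : star R a b = false by rewrite /star (negbTE aRN).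
split; first exact: simple_update_edge sg (neq_ab _ _ dab).
apply: rooted_at_remove_edge aRN => // x y sxy.
have := outside (x, y); rewrite !inE /= sxy; case/andP: sxy => -> _.
by rewrite andbT => /negbNE/eqP->.
Qed.

Lemma flip_path_star g R :
  simple_rooted_at R g -> flip_path (simple_rooted_at R) g (star R).
Proof.
have [n] := ubnP #|edge_diff g (star R)|; elim: n g => // n IHn g ltdn Qg.
have [/edge_diff_eq0 gE|diff0] := eqVneq (edge_diff g (star R)) set0.
  by rewrite -{1}gE; apply: flip_path0.
have [a [b [dab Qg']]] := flip_towards_star Qg diff0.
apply: flip_pathS Qg (differ_update_edge _ _ _ _) (IHn _ _ Qg').
rewrite edge_diff_update_edge -ltnS; apply: leq_trans ltdn.
by rewrite ltnS (cardsD1 (a, b) (edge_diff g (star R))) dab.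
Qed.

Definition simple_single_root g := simple_digraph g /\ has_unique_root g.

Lemma simple_rooted_at_single_root R g :
  simple_rooted_at R g -> simple_single_root g.
Proof. by case=> sg /unique_rootP rootR; split=> //; exists R. Qed.

Lemma flip_path_star_setT R :
  R != set0 -> flip_path simple_single_root (star R) (star [set: T]).
Proof.
have [n] := ubnP #|~: R|; elim: n R => // n IHn R ltRn R0.
have Qstar S : S != set0 -> simple_single_root (star S).
  by move=> S0; apply: (@simple_rooted_at_single_root S); split;
    [apply: simple_star|apply: star_rooted_at].
have [RC0|/set0Pn[x]] := eqVneq (~: R) set0.
  by rewrite -[R]setCK RC0 setC0 in R0 *; apply/flip_path0/Qstar.
rewrite inE => xRN; have [r rR] := set0Pn _ R0.
have neq_xr : x != r by apply: contraNneq xRN => ->.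
set g := update_edge (star R) x r true.
have Qg : simple_rooted_at (x |: R) g.
  by split; [apply/simple_update_edge/neq_xr/simple_star|apply: rooted_at_star_update].
apply: flip_pathS (Qstar _ R0) (differ_update_edge _ _ _ _) _.
apply: flip_path_trans (flip_path_sub (@simple_rooted_at_single_root _) (flip_path_star Qg)) _.
have xR0 : x |: R != set0 by apply/set0Pn; exists x; rewrite setU11.
apply: IHn xR0; rewrite -ltnS; apply: leq_trans ltRn.
by rewrite ltnS proper_card // properC properUr // sub1set.
Qed.

Lemma flip_path_complete g R :
  simple_rooted_at R g -> flip_path simple_single_root g (star [set: T]).
Proof.
move=> Qg; have [_ [R0 _ _]] := Qg.
apply: flip_path_trans (flip_path_star_setT R0).
exact: flip_path_sub (@simple_rooted_at_single_root R) (flip_path_star Qg).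
Qed.

End ReductionToStar.

Theorem lemma16 (T : finType) (g1 g2 : rel T) :
  simple_digraph g1 -> simple_digraph g2 ->
  has_unique_root g1 -> has_unique_root g2 ->
  (exists (k : nat) (G : nat -> rel T),
      G 0 =2 g1 /\ G k =2 g2 /\
      (forall i, i <= k -> simple_digraph (G i) /\ has_unique_root (G i)) /\
      (forall i, i < k -> differ_at_most_one_edge (G i) (G i.+1)))
  /\
  (forall R : {set T}, unique_root g1 R -> unique_root g2 R ->
    exists (k : nat) (G : nat -> rel T),
      G 0 =2 g1 /\ G k =2 g2 /\
      (forall i, i <= k -> simple_digraph (G i) /\ unique_root (G i) R) /\
      (forall i, i < k -> differ_at_most_one_edge (G i) (G i.+1))).
Proof.
move=> s1 s2 [R1 /unique_rootP root1] [R2 /unique_rootP root2]; split.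
  apply: (@flip_path_sequence _ (@simple_single_root T)).
  apply: flip_path_trans (flip_path_complete (conj s1 root1)) _.
  exact/flip_path_sym/(flip_path_complete (conj s2 root2)).
move=> R /unique_rootP rootR1 /unique_rootP rootR2.
have path12 := flip_path_trans (flip_path_star (conj s1 rootR1))
                               (flip_path_sym (flip_path_star (conj s2 rootR2))).
apply: (@flip_path_sequence _ (fun g => simple_digraph g /\ unique_root g R)).
by apply: flip_path_sub path12 => g [sg /unique_rootP].
Qed.
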